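(* Let $k=2j$ with $j\ge1$, let $p\in\mathbb{S}^n$, $R\in(0,\pi/2)$, $B_R=\{q:\mathbf{d}_p(q)\le R\}$, and let $x,y\in\partial B_R$ with $x\neq y$; set $r=\mathbf{d}_y(x)$. Then \[\tan R\,\langle\Psi_y,\nabla\mathbf{d}_p\rangle\big|_x=-\sum_{i=0}^{j-1}a_{i+1}(1-\cos r)^{-i},\] where $a_1=\frac{1}{2j-1}$ and $a_{i+1}=\frac{2(j-i)}{2j-(i+1)}a_i$ for $i=1,\dots,j-1$.
   Context: $\mathbb{S}^n$ is the unit round sphere with Levi-Civita connection $\nabla$; $\mathbf{d}_q$ is geodesic distance from $q$. $I_k(r)=\int_0^r\sin^{k-1}s\,ds$, $\varphi(t)=I_k(t)\sin^{1-k}t$ for $t\in(0,\pi)$, $\varphi(0)=0$, $\Phi_q=(\varphi\circ\mathbf{d}_q)\nabla\mathbf{d}_q$ on $\mathbb{S}^n\setminus\{-q\}$, and $\Psi_q:=\Phi_{-q}$ on $\mathbb{S}^n\setminus\{q\}$. *)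

(* S^n is realised as the unit sphere in R^(n+1),
   points are row vectors 'rV[R]_(n.+1) with the Euclidean inner product. *)
From HB Require Import structures.
From mathcomp Require Import all_boot all_order all_algebra.
From mathcomp Require Import all_classical all_reals all_analysis.
Set Implicit Arguments. Unset Strict Implicit. Unset Printing Implicit Defensive.
Import Order.TTheory GRing.Theory Num.Theory.
Import numFieldNormedType.Exports.
Local Open Scope classical_set_scope.
Local Open Scope ring_scope.

Section Defs.
Variables (R : realType) (n : nat).
Notation V := 'rV[R]_(n.+1).

Definition dotv (u v : V) : R := \sum_(i < n.+1) u ord0 i * v ord0 i.

Definition on_sphere (x : V) : Prop := dotv x x = 1.

Definition gdist (q : V) (x : V) : R := acos (dotv q x).

(* Riemannian gradient of f : S^n -> R at x: the tangent vector g
   (g . x = 0) such that for every unit tangent vector w the derivative of f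
   along the unit-speed geodesic t |-> cos t x + sin t w at t = 0 is g . w. *)
Definition is_sgrad (f : V -> R) (x g : V) : Prop :=
  dotv g x = 0 /\
  forall w : V, dotv w x = 0 -> dotv w w = 1 ->
    is_derive (0 : R) (1 : R) (fun t : R => f (cos t *: x + sin t *: w)) (dotv g w).

End Defs.

Definition Ik (R : realType) (k : nat) (r : R) : R :=
  (\int[lebesgue_measure]_(s in `[0, r]) (sin s ^+ k.-1))%R.

Definition phik (R : realType) (k : nat) (t : R) : R :=
  if t == 0 then 0 else Ik k t / sin t ^+ k.-1.

(* acoef j i = a_(i+1):  a_1 = 1/(2j-1),  a_(i+1) = 2(j-i)/(2j-(i+1)) a_i *)
Fixpoint acoef (R : realType) (j : nat) (i : nat) : R :=
  match i with
  | 0 => 1 / (2 * j%:R - 1)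
  | i'.+1 => (2 * (j%:R - i%:R)) / (2 * j%:R - (i%:R + 1)) * acoef R j i'
  end.

From HB Require Import structures.
From mathcomp Require Import all_boot all_order all_algebra.
From mathcomp Require Import all_classical all_reals all_analysis.
From mathcomp Require Import ring lra zify.
Import Order.TTheory GRing.Theory Num.Theory.
Import numFieldNormedType.Exports.
Local Open Scope ring_scope.

(* The gradient of d_q at x is the normalised tangential projection
   -(q - (q.x) x) / sin d_q(x), so with s = d_{-y}(x) and p.x = p.y = cos R one
   gets <Psi_y, grad d_p>(x) = -phi(s) cos R (1 + cos s) / (sin s sin R).
   The integral has the closed form
   I_{2j}(t) = sum_i a_{i+1} (1 - cos t)^j (1 + cos t)^(j-1-i):
   the recursion for the a_i is exactly what makes its derivative telescope
   to sin^(2j-1) t.  Dividing by sin^(2j) s = (1 - cos s)^j (1 + cos s)^j leaves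
   sum_i a_{i+1} (1 + cos s)^(-i), and 1 + cos s = 1 - cos r since s = pi - r. *)

Section SphereGeometry.
Context {R : realType} {n : nat}.
Notation V := 'rV[R]_(n.+1).
Implicit Types p q u v w x y : V.

Lemma dotvC u v : dotv u v = dotv v u.
Proof. by apply: eq_bigr => i _; rewrite mulrC. Qed.

Lemma dotvDl u v w : dotv (u + v) w = dotv u w + dotv v w.
Proof. by rewrite /dotv -big_split; apply: eq_bigr => i _; rewrite !mxE mulrDl. Qed.

Lemma dotvZl (a : R) u w : dotv (a *: u) w = a * dotv u w.
Proof. by rewrite /dotv mulr_sumr; apply: eq_bigr => i _; rewrite !mxE mulrA. Qed.

Lemma dotvNl u w : dotv (- u) w = - dotv u w.
Proof. by rewrite -scaleN1r dotvZl mulN1r. Qed.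

Lemma dotvBl u v w : dotv (u - v) w = dotv u w - dotv v w.
Proof. by rewrite dotvDl dotvNl. Qed.

Lemma dotvDr u v w : dotv w (u + v) = dotv w u + dotv w v.
Proof. by rewrite dotvC dotvDl !(dotvC w). Qed.

Lemma dotvZr (a : R) u w : dotv w (a *: u) = a * dotv w u.
Proof. by rewrite dotvC dotvZl dotvC. Qed.

Lemma dotvNr u w : dotv w (- u) = - dotv w u.
Proof. by rewrite dotvC dotvNl dotvC. Qed.

Lemma dotvBr u v w : dotv w (u - v) = dotv w u - dotv w v.
Proof. by rewrite dotvDr dotvNr. Qed.

Definition dotvE := (dotvDl, dotvBl, dotvNl, dotvZl, dotvDr, dotvBr, dotvNr, dotvZr).

Lemma dotv_ge0 u : 0 <= dotv u u.
Proof. by apply: sumr_ge0 => i _; rewrite -expr2 sqr_ge0. Qed.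

Lemma dotv_eq0 u : (dotv u u == 0) = (u == 0).
Proof.
apply/idP/eqP => [|->]; last by rewrite /dotv big1 // => i _; rewrite mxE mul0r.
rewrite psumr_eq0 => [/allP u0|i _]; last by rewrite -expr2 sqr_ge0.
apply/rowP => i; rewrite mxE.
by have := u0 i (mem_index_enum _); rewrite implyTb mulf_eq0 orbb => /eqP.
Qed.

Lemma dotv_sphere_bound u v : on_sphere u -> on_sphere v -> -1 <= dotv u v <= 1.
Proof.
move=> su sv; have := dotv_ge0 (u - v); have := dotv_ge0 (u + v).
rewrite !dotvE su sv (dotvC v u) => ? ?; apply/andP; split; lra.
Qed.

Lemma dotv_sphere_lt1 u v : on_sphere u -> on_sphere v -> u != v -> dotv u v < 1.
Proof.
move=> su sv uv; rewrite lt_neqAle; case/andP: (dotv_sphere_bound u v su sv) => _ ->.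
rewrite andbT; apply: contra uv => /eqP uv1.
by rewrite -subr_eq0 -dotv_eq0 !dotvE su sv (dotvC v u) uv1 !subrr.
Qed.

Lemma dotv_sphere_gtN1 u v : on_sphere u -> on_sphere v -> u != - v -> -1 < dotv u v.
Proof.
move=> su sv uv; rewrite lt_neqAle; case/andP: (dotv_sphere_bound u v su sv) => -> _.
rewrite andbT eq_sym; apply: contra uv => /eqP uvN1.
by rewrite -addr_eq0 -dotv_eq0 !dotvE su sv (dotvC v u) uvN1; apply/eqP; ring.
Qed.

Lemma dotv_sphere_open_bound u v : on_sphere u -> on_sphere v ->
  u != v -> u != - v -> -1 < dotv u v < 1.
Proof. by move=> su sv uv uNv; rewrite dotv_sphere_gtN1 ?dotv_sphere_lt1. Qed.

Lemma on_sphereN u : on_sphere u -> on_sphere (- u).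
Proof. by rewrite /on_sphere dotvNl dotvNr opprK. Qed.

Lemma dotv_open_bound_gdist q x : on_sphere q -> on_sphere x ->
  0 < gdist q x < pi -> -1 < dotv q x < 1.
Proof.
move=> sq sx /andP[d_gt0 d_ltpi]; rewrite dotv_sphere_open_bound //.
  by apply: contraTneq d_gt0 => <-; rewrite /gdist sq acos1 ltxx.
apply: contraTneq d_ltpi => ->.
by rewrite /gdist dotvNl sx acosN1 ltxx.
Qed.

Lemma dotvN_open_bound_level p x y : on_sphere x -> on_sphere y ->
  x != y -> dotv p x = dotv p y -> dotv p x != 0 -> -1 < dotv (- y) x < 1.
Proof.
move=> sx sy x_neq_y pxy px_neq0; apply: dotv_sphere_open_bound => //.
- exact: on_sphereN.
- apply: contra px_neq0 => /eqP x_eq; move: pxy; rewrite -x_eq !dotvNr => pxy.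
  by apply/eqP; lra.
- by rewrite eqr_opp eq_sym.
Qed.

Lemma cos_gdist q x : on_sphere q -> on_sphere x -> cos (gdist q x) = dotv q x.
Proof. by move=> sq sx; rewrite /gdist acosK // in_itv dotv_sphere_bound. Qed.

Lemma sin_gdist_gt0 q x : -1 < dotv q x < 1 -> 0 < sin (gdist q x).
Proof.
move=> /andP[? ?]; apply: sin_gt0_pi.
by rewrite acos_gt0 ?acos_ltpi ?ltW ?andbT.
Qed.

Lemma dotv_tangent u v x : on_sphere x ->
  dotv (u - dotv u x *: x) (v - dotv v x *: x) = dotv u v - dotv u x * dotv v x.
Proof. by move=> sx; rewrite !dotvE sx (dotvC x v); ring. Qed.

Definition gdist_grad q x : V := - (sin (gdist q x))^-1 *: (q - dotv q x *: x).

Lemma is_sgrad_gdist q x : on_sphere x -> -1 < dotv q x < 1 ->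
  is_sgrad (gdist q) x (gdist_grad q x).
Proof.
move=> sx qx; set a := dotv q x.
split; first by rewrite dotvZl dotvBl dotvZl sx mulr1 subrr mulr0.
move=> w wx ww; set b := dotv q w.
have -> : (fun t => gdist q (cos t *: x + sin t *: w)) =
          acos \o (fun t => cos t * a + sin t * b).
  by apply/funext => t; rewrite /gdist !dotvE.
have dacos : is_derive (cos 0 * a + sin 0 * b) 1 acos (- (Num.sqrt (1 - a ^+ 2))^-1).
  by rewrite cos0 sin0 mul1r mul0r addr0; apply: is_derive1_acos.
apply: is_derive_eq (@is_derive1_comp _ acos (fun t => cos t * a + sin t * b) 0 _ _ dacos _) _.
rewrite sin0 cos0 /= !(scaler0, oppr0, add0r, addr0) -[b *: 1]/(b * 1) mulr1.
rewrite /gdist_grad !dotvE -/a -/b (dotvC x w) wx mulr0 subr0 /gdist.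
by rewrite sin_acos //; case/andP: qx => ? ?; rewrite !ltW.
Qed.

Lemma is_sgrad_unique f x G G' : is_sgrad f x G -> is_sgrad f x G' -> G = G'.
Proof.
move=> [Gx dG] [G'x dG']; set D := G - G'.
have Dx : dotv D x = 0 by rewrite dotvBl Gx G'x subrr.
have Dw w : dotv w x = 0 -> dotv w w = 1 -> dotv D w = 0.
  move=> wx ww; rewrite dotvBl.
  have := dG w wx ww; have := dG' w wx ww.
  by move=> [_ <-] [_ <-]; rewrite subrr.
apply/eqP; rewrite -subr_eq0 -dotv_eq0 -/D; apply: contraT => DD_neq0.
have DD_gt0 : 0 < dotv D D by rewrite lt_neqAle eq_sym DD_neq0 dotv_ge0.
set s := Num.sqrt (dotv D D).
have s_gt0 : 0 < s by rewrite sqrtr_gt0.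
have s2 : s ^+ 2 = dotv D D by rewrite sqr_sqrtr // ltW.
have := Dw (s^-1 *: D); rewrite !dotvZl !dotvZr Dx mulr0 -s2 => /(_ erefl).
have -> : s^-1 * (s^-1 * s ^+ 2) = 1 by field; rewrite gt_eqF.
move=> /(_ erefl) /eqP; rewrite mulf_eq0 invr_eq0 expf_eq0 /=.
by rewrite gt_eqF.
Qed.

Lemma dotv_gdist_grad q p x : on_sphere x ->
  dotv (gdist_grad q x) (gdist_grad p x) =
  (dotv q p - dotv q x * dotv p x) / (sin (gdist q x) * sin (gdist p x)).
Proof. by move=> sx; rewrite dotvZl dotvZr dotv_tangent // invfM; ring. Qed.

End SphereGeometry.

Definition Ik_even {R : realType} (j : nat) (s : R) : R :=
  \sum_(i < j) acoef R j i * ((1 - cos s) ^+ j * (1 + cos s) ^+ (j.-1 - i)).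

Section EvenSinePowerIntegral.
Context {R : realType}.

Lemma is_derive_cos_monomial (a m : nat) (s : R) : (0 < a)%N ->
  is_derive s 1 (fun t => (1 - cos t) ^+ a * (1 + cos t) ^+ m)
    (sin s * (1 - cos s) ^+ a.-1 *
       ((a + m)%:R * (1 + cos s) ^+ m - 2 * m%:R * (1 + cos s) ^+ m.-1)).
Proof.
case: a => // a _.
have du : is_derive s 1 (cst 1 - cos) (sin s).
  by apply: is_derive_eq; rewrite sub0r opprK.
have dv : is_derive s 1 (cst 1 + cos) (- sin s).
  by apply: is_derive_eq; rewrite add0r.
rewrite (_ : (fun t => _) = (cst 1 - cos) ^+ a.+1 * (cst 1 + cos) ^+ m); last first.
  by apply/funext => t; rewrite !fctE.
apply: is_derive_eq; rewrite !fctE -![_ *: _]/(_ * _).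
by case: m => [|m] /=; rewrite ?expr0 ?exprS; ring.
Qed.

Context {j : nat} (j_gt0 : (0 < j)%N).

Lemma acoef0 : ((2 * j).-1)%:R * acoef R j 0 = 1.
Proof.
case: j j_gt0 => // d _; rewrite [acoef _ _ _]/= mul1r.
have -> : ((2 * d.+1).-1 = d + d + 1)%N by lia.
by field; have := ler0n R d; lra.
Qed.

Lemma acoef_last : acoef R j j = 0.
Proof. by case: j j_gt0 => // d _; rewrite /= subrr mulr0 mul0r mul0r. Qed.

Lemma acoefSr k : (k < j)%N ->
  ((2 * j).-1 - k.+1)%:R * acoef R j k.+1 = 2 * (j.-1 - k)%:R * acoef R j k.
Proof.
move=> lt_kj; have [Ej|lt_k1j] : k.+1 = j \/ (k.+1 < j)%N by lia.
  have -> : (j.-1 - k = 0)%N by lia.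
  by rewrite Ej acoef_last !mulr0 mul0r.
have [d Ej] : exists d, j = (k.+2 + d)%N by exists (j - k.+2)%N; lia.
have -> : ((2 * j).-1 - k.+1 = k + d + d + 2)%N by lia.
have -> : (j.-1 - k = d.+1)%N by lia.
rewrite [acoef R _ k.+1]/= Ej.
by field; have := ler0n R k; have := ler0n R d; lra.
Qed.

Lemma acoef_telescope (w : R) :
  \sum_(i < j) acoef R j i * ((j + (j.-1 - i))%:R * w ^+ (j.-1 - i)
                              - 2 * (j.-1 - i)%:R * w ^+ (j.-1 - i).-1)
  = w ^+ j.-1.
Proof.
(* The recursion defining acoef makes the i-th summand equal to c i - c i.+1. *)
pose c k := ((2 * j).-1 - k)%:R * acoef R j k * w ^+ (j.-1 - k).
transitivity (\sum_(0 <= k < j) (- c k.+1 - - c k)).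
  rewrite big_mkord; apply: eq_bigr => k _; rewrite /c opprK addrC.
  have lt_kj := ltn_ord k.
  have -> : (j + (j.-1 - k) = (2 * j).-1 - k)%N by lia.
  have -> : (j.-1 - k.+1 = (j.-1 - k).-1)%N by lia.
  rewrite acoefSr //; ring.
rewrite telescope_sumr // /c subn0 acoef0 acoef_last.
by rewrite subn0 mulr0 mul0r mul1r oppr0 opprK add0r.
Qed.

Lemma sin_expr_odd (s : R) :
  sin s ^+ (2 * j).-1 = sin s * (1 - cos s) ^+ j.-1 * (1 + cos s) ^+ j.-1.
Proof.
rewrite -mulrA -exprMn (_ : (1 - cos s) * (1 + cos s) = sin s ^+ 2).
  by rewrite -exprM -exprS; congr (_ ^+ _); lia.
by rewrite sin2cos2; ring.
Qed.

Lemma is_derive_Ik_even (s : R) : is_derive s 1 (Ik_even j) (sin s ^+ (2 * j).-1).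
Proof.
rewrite (_ : Ik_even j = \sum_(i < j) (fun t => acoef R j i *
    ((1 - cos t) ^+ j * (1 + cos t) ^+ (j.-1 - i)))); last first.
  by apply/funext => t; rewrite fct_sumE.
apply: is_derive_eq.
  apply: is_derive_sum => i; apply: is_deriveZ; exact: is_derive_cos_monomial.
rewrite sin_expr_odd -(acoef_telescope (1 + cos s)) mulr_sumr.
by apply: eq_bigr => i _; rewrite /= -![_ *: _]/(_ * _) mulrCA.
Qed.

Lemma Ik_evenE (T : R) : 0 < T -> Ik (2 * j) T = Ik_even j T.
Proof.
move=> T_gt0.
have cont (f : R -> R) : (forall x, derivable f x 1) -> continuous f.
  by move=> df x; apply/differentiable_continuous/derivable1_diffP.
have dI (x : R) : derivable (Ik_even j) x 1 by case: (is_derive_Ik_even x).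
have cI := cont _ dI.
have cS : continuous (fun s : R => sin s ^+ (2 * j).-1).
  rewrite (_ : (fun s => _) = sin ^+ (2 * j).-1); last by apply/funext => s; rewrite exprfctE.
  by apply: cont => x; apply: ex_derive; apply: is_deriveX; exact: is_derive_sin.
have I0 : Ik_even j (0 : R) = 0.
  rewrite /Ik_even big1 // => i _.
  by rewrite cos0 subrr expr0n gtn_eqF // mul0r mulr0.
rewrite /Ik /Rintegral (@continuous_FTC2 _ _ (Ik_even j) _ _ T_gt0).
- by rewrite I0 -EFinB subr0.
- exact: continuous_subspaceT.
- by split; [move=> x _; apply: dI | apply: cvg_at_right_filter; apply: cI
            | apply: cvg_at_left_filter; apply: cI].
- by move=> x _; rewrite derive1E; case: (is_derive_Ik_even x).
Qed.

Lemma Ik_even_div_sin (s : R) : sin s != 0 ->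
  Ik_even j s * (1 + cos s) / sin s ^+ (2 * j) =
  \sum_(i < j) acoef R j i * (1 + cos s) ^- i.
Proof.
move=> sin_neq0; rewrite /Ik_even; set u := 1 - cos s; set w := 1 + cos s.
have sin2 : sin s ^+ 2 = u * w by rewrite /u /w sin2cos2; ring.
have : u * w != 0 by rewrite -sin2 expf_neq0.
rewrite mulf_eq0 negb_or => /andP[u_neq0 w_neq0].
rewrite exprM sin2 exprMn !mulr_suml; apply: eq_bigr => i _.
have -> : w ^+ j = w ^+ (j.-1 - i) * w * w ^+ i.
  by rewrite -exprSr -exprD; congr (_ ^+ _); have := ltn_ord i; lia.
by field; rewrite !expf_neq0 ?u_neq0 ?w_neq0.
Qed.
End EvenSinePowerIntegral.

Theorem lemma2p8 (R : realType) (n j : nat) (p x y : 'rV[R]_(n.+1)) (Rad : R) :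
  (1 <= j)%N ->
  on_sphere p -> on_sphere x -> on_sphere y ->
  0 < Rad -> Rad < pi / 2 ->
  gdist p x = Rad -> gdist p y = Rad -> x != y ->
  (exists G g, is_sgrad (gdist (- y)) x G /\ is_sgrad (gdist p) x g) /\
  (forall G g : 'rV[R]_(n.+1),
     is_sgrad (gdist (- y)) x G -> is_sgrad (gdist p) x g ->
     tan Rad * dotv (phik (2 * j)%N (gdist (- y) x) *: G) g =
     - \sum_(i < j) acoef R j i * (1 - cos (gdist y x)) ^- i).
Proof.
move=> j_gt0 sp sx sy Rad_gt0 Rad_lt dpx dpy x_neq_y.
have cR_gt0 : 0 < cos Rad by apply: cos_gt0_pihalf; lra.
have sR_gt0 : 0 < sin Rad by apply: sin_gt0_pihalf; lra.
have px : dotv p x = cos Rad by rewrite -dpx cos_gdist.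
have py : dotv p y = cos Rad by rewrite -dpy cos_gdist.
have px_bound : -1 < dotv p x < 1.
  by apply: dotv_open_bound_gdist; rewrite // dpx Rad_gt0 /=; lra.
have yx_bound : -1 < dotv (- y) x < 1.
  by apply: (dotvN_open_bound_level p); rewrite // px ?py // gt_eqF.
have dG := is_sgrad_gdist (- y) x sx yx_bound.
have dg := is_sgrad_gdist p x sx px_bound.
split; first by exists (gdist_grad (- y) x), (gdist_grad p x).
move=> G g /is_sgrad_unique /(_ dG) -> /is_sgrad_unique /(_ dg) ->.
have cos_s : cos (gdist (- y) x) = dotv (- y) x by rewrite cos_gdist //; apply: on_sphereN.
have s_gt0 : 0 < gdist (- y) x.
  by apply: acos_gt0; case/andP: yx_bound => /ltW -> ->.
have sin_s_neq0 : sin (gdist (- y) x) != 0 by rewrite gt_eqF ?sin_gdist_gt0.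
rewrite /phik gt_eqF // Ik_evenE // dotvZl dotv_gdist_grad // dpx cos_gdist //.
rewrite -[dotv y x]opprK -dotvNl -cos_s opprK -Ik_even_div_sin //.
rewrite dotvNl (dotvC y p) py px /tan; set S := sin (gdist (- y) x).
have -> : S ^+ (2 * j) = S ^+ (2 * j).-1 * S by rewrite -exprSr prednK ?muln_gt0.
by field; rewrite sin_s_neq0 expf_neq0 // !gt_eqF.
Qed.
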